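(* Let $D$ be a $G$-invariant domain in $\Xi^+$. Then $W^0\cdot(\mathcal D^{\llcorner})^+=\mathcal D^{\llcorner}_\circ$.
   Context: $G$ is a connected, non-compact, real simple Lie group contained in its universal complexification $G^{\mathbb C}$; $K$ maximal compact, $G/K$ an irreducible Hermitian symmetric space of non-compact type, $\theta$ the Cartan involution, $\mathfrak g=\mathfrak k\oplus\mathfrak p$, $\mathfrak a\subset\mathfrak p$ maximal abelian, $r=\dim\mathfrak a$, $\mathfrak g^\alpha$ restricted root spaces, $e_1,\dots,e_r$ a basis of $\mathfrak a^*$ with restricted roots of type $C_r$ ($\pm2e_j,\pm e_j\pm e_k$) or $BC_r$ (additionally $\pm e_j$). $Z_0$ is the central element of $\mathfrak k$ defining the complex structure; $E_j\in\mathfrak g^{2e_j}$ with $A_j=[\theta E_j,E_j]$, $[A_j,E_j]=2E_j$, $[Z_0,E_j-\theta E_j]=A_j$, $[Z_0,A_j]=-(E_j-\theta E_j)$. $\Lambda_r=\mathrm{span}_{\mathbb R}\{E_j\}$, $\Lambda_r^{\llcorner}=\{\sum x_jE_j:x_j\ge0\}$. $W_K(\Lambda_r)=N_K(\Lambda_r)/Z_K(\Lambda_r)$ acts on $\Lambda_r$ by permutations of the $E_j$ and is generated by the reflections $\gamma_{k\,k+1}$ ($1\le k\le r-1$) swapping the $k$-th and $(k+1)$-th coordinates. $x_0=eK^{\mathbb C}\in G^{\mathbb C}/K^{\mathbb C}$, $\Xi^+=G\exp(i\{\sum x_jE_j:x_j>-1\})\cdot x_0$. For $D$: $\mathcal D^{\llcorner}=\{X\in\Lambda_r^{\llcorner}:\exp(iX)\cdot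 x_0\in D\}$ (a $W_K(\Lambda_r)$-invariant open subset of $\Lambda_r^{\llcorner}$); $(\mathcal D^{\llcorner})^+=\mathcal D^{\llcorner}\cap\{\sum x_jE_j:x_1\ge x_2\ge\dots\ge x_r\ge0\}$ (which is connected); $\mathcal D^{\llcorner}_\circ$ is the connected component of $\mathcal D^{\llcorner}$ containing $(\mathcal D^{\llcorner})^+$. $\Gamma^0$ is the set of those $\gamma_{k\,k+1}$ whose fixed-point hyperplane contains a non-zero element of $(\mathcal D^{\llcorner})^+$, and $W^0$ is the subgroup of $W_K(\Lambda_r)$ generated by $\Gamma^0$. *)

From HB Require Import structures.
From mathcomp Require Import all_boot all_order all_algebra all_fingroup.
From mathcomp Require Import all_classical all_reals all_analysis.
Set Implicit Arguments. Unset Strict Implicit. Unset Printing Implicit Defensive.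
Import Order.TTheory GRing.Theory Num.Theory.
Import numFieldTopology.Exports.
Local Open Scope classical_set_scope.
Local Open Scope ring_scope.

(* Combinatorial model of Lambda_r = span_R {E_1,...,E_r}: a point
   sum_j x_j E_j is the row vector x with x 0 j = x_{j+1}.
   W_K(Lambda_r) acts by permutations of coordinates (the full symmetric
   group 'S_r, generated by the adjacent transpositions gamma_{k k+1}). *)

Definition cone (R : realType) (r : nat) : set 'rV[R]_r :=
  [set x | forall i : 'I_r, 0 <= x ord0 i].

Definition chamber (R : realType) (r : nat) : set 'rV[R]_r :=
  [set x | (forall i : 'I_r, 0 <= x ord0 i) /\
           (forall i j : 'I_r, (i <= j)%N -> x ord0 j <= x ord0 i)].

Definition wact (R : realType) (r : nat) (s : 'S_r) (x : 'rV[R]_r) : 'rV[R]_r :=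
  col_perm s x.

(* the index k+1 (used only when k+1 < r; defaults to k otherwise) *)
Definition nextord (r : nat) (k : 'I_r) : 'I_r := insubd k k.+1.

(* gamma_{k k+1}, for k : 'I_r with k+1 < r (0-based indices) *)
Definition gamma (r : nat) (k : 'I_r) : 'S_r := tperm k (nextord k).

Definition plus_part (R : realType) (r : nat) (U : set 'rV[R]_r) : set 'rV[R]_r :=
  U `&` @chamber R r.

Definition Gamma0 (R : realType) (r : nat) (U : set 'rV[R]_r) : {set 'I_r} :=
  [set k : 'I_r | (k.+1 < r)%N &&
     `[< exists x, plus_part U x /\ x != 0 /\ x ord0 k = x ord0 (nextord k) >]].

Definition W0 (R : realType) (r : nat) (U : set 'rV[R]_r) : {set 'S_r} :=
  <<(@gamma r @: Gamma0 U)>>%g.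

From HB Require Import structures.
From mathcomp Require Import all_boot all_order all_algebra all_fingroup.
From mathcomp Require Import all_classical all_reals all_analysis.
From mathcomp Require Import lra zify.
Import Order.TTheory GRing.Theory Num.Theory.
Import numFieldTopology.Exports.
Set Implicit Arguments. Unset Strict Implicit. Unset Printing Implicit Defensive.
Local Open Scope classical_set_scope.
Local Open Scope ring_scope.

(* The cone is the union of the closed chambers [w C]. Those with [w] in
   [W0] and those with [w] outside [W0] form two closed sets which do not
   meet inside [D]: a permutation carrying a point of [C] to a point of
   [(D)^+] can be undone one adjacent transposition at a time, each fixing a
   point of [(D)^+] on its wall and hence lying in [Gamma0]. So the component
   of a point of [(D)^+] stays in the [W0]-chambers, i.e. in [W0 (D)^+].
   Conversely [w (D)^+] and [w gamma_k (D)^+] meet at [w z], [z] a point of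
   [(D)^+] on the wall of [gamma_k], so the connected sets [w (D)^+],
   [w] in [W0], chain together inside one component. *)

Section AdjacentTranspositions.
Variable r : nat.
Implicit Types (k : 'I_r) (u : 'S_r).

Lemma nextordE k : (k.+1 < r)%N -> nextord k = k.+1 :> nat.
Proof. by move=> hk; rewrite /nextord val_insubd hk. Qed.

Lemma nextord_neq k : (k.+1 < r)%N -> k != nextord k.
Proof. by move=> hk; apply/eqP => /(congr1 val); rewrite /= nextordE // => /n_Sn. Qed.

Lemma nextord_surj (j : 'I_r) n : j = n.+1 :> nat ->
  exists k : 'I_r, [/\ k = n :> nat, nextord k = j & (k.+1 < r)%N].
Proof.
move=> hj; have hn : (n < r)%N by rewrite (leq_trans _ (ltn_ord j)) // hj.
exists (Ordinal hn); split => //=; last by rewrite -hj.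
by apply: val_inj => /=; rewrite nextordE //= -hj.
Qed.

Lemma nonincreasing_adjacent d (T : porderType d) (g : 'I_r -> T) :
  (forall k, (k.+1 < r)%N -> (g (nextord k) <= g k)%O) ->
  forall i j : 'I_r, (i <= j)%N -> (g j <= g i)%O.
Proof.
move=> gadj; suff gd n (i j : 'I_r) : j = (i + n)%N :> nat -> (g j <= g i)%O.
  by move=> i j ij; apply: (gd (j - i)%N); rewrite subnKC.
elim: n j => [|n IH] j; first by rewrite addn0 => /val_inj ->.
rewrite addnS => /nextord_surj[k [hk <- kr]].
exact: le_trans (gadj _ kr) (IH _ hk).
Qed.

Lemma perm_ascending_eq1 u :
  (forall k, (k.+1 < r)%N -> (u k < u (nextord k))%N) -> u = 1%g.
Proof.
move=> uasc.
have above n (i : 'I_r) : i = n :> nat -> (n <= u i)%N.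
  elim: n i => [//|n IH] i /nextord_surj[k [hk <- kr]].
  by apply: leq_trans (uasc _ kr); rewrite ltnS IH.
have below m (i : 'I_r) : (i + m)%N = r.-1 -> (u i <= i)%N.
  elim: m i => [|m IH] i hi; first by have := ltn_ord (u i); lia.
  have ir : (i.+1 < r)%N by have := ltn_ord i; lia.
  by have := IH (nextord i); have := uasc _ ir; rewrite nextordE //; lia.
apply/permP => i; apply: val_inj; rewrite perm1 /=.
by have := above _ i erefl; have := below (r.-1 - i)%N i; have := ltn_ord i; lia.
Qed.

(* Both the sorting of a point and the reduction of a transporting
   permutation to the identity are obtained by minimising this potential. *)
Definition perm_weight (R : numDomainType) (f : 'I_r -> R) u : R :=
  \sum_(i < r) i%:R * f (u i).

Lemma perm_weight_gammaM (R : realDomainType) (f : 'I_r -> R) u k :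
  (k.+1 < r)%N ->
  perm_weight f (gamma k * u) = perm_weight f u + (f (u k) - f (u (nextord k))).
Proof.
move=> kr; have kk := nextord_neq kr; rewrite /perm_weight.
rewrite (bigD1 k) // (bigD1 (nextord k)) 1?eq_sym //=.
rewrite [in RHS](bigD1 k) // [in RHS](bigD1 (nextord k)) 1?eq_sym //=.
rewrite !permM tpermL tpermR.
under eq_bigr => i /andP[ik ik'] do rewrite permM tpermD 1?eq_sym //.
rewrite nextordE // -addn1 natrD; lra.
Qed.

Lemma exists_perm_sorted (R : realDomainType) (x : 'I_r -> R) :
  exists u, forall i j : 'I_r, (i <= j)%N -> x (u j) <= x (u i).
Proof.
have [u _ umin] := arg_minP (perm_weight x) (isT : predT 1%g).
exists u; apply: nonincreasing_adjacent => k kr; rewrite leNgt; apply/negP => lt.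
by have := umin (gamma k * u)%g isT; rewrite perm_weight_gammaM //; lra.
Qed.

End AdjacentTranspositions.

Section WeylAction.
Variables (R : realType) (r : nat).
Implicit Types (x : 'rV[R]_r) (s : 'S_r).

Lemma wactE s x i : wact s x ord0 i = x ord0 (s i).
Proof. by rewrite mxE. Qed.

Lemma wact1 x : wact 1%g x = x.
Proof. exact: col_perm1. Qed.

Lemma wactM s t x : wact (s * t)%g x = wact s (wact t x).
Proof. exact: col_permM. Qed.

Lemma wactK s x : wact s (wact s^-1 x) = x.
Proof. by rewrite -wactM mulgV wact1. Qed.

Lemma wact_gamma_id k x : x ord0 k = x ord0 (nextord k) -> wact (gamma k) x = x.
Proof.
move=> xk; apply/matrixP => i j; rewrite mxE (ord1 i).
by case: tpermP => [->|->|].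
Qed.

Lemma continuous_wact s : continuous (@wact R r s).
Proof.
move=> x A /nbhs_ballP[e e0 eA]; apply/nbhs_ballP; exists e => // y [_ xy].
by apply: eA; split => // i j; rewrite !mxE; exact: xy.
Qed.

Lemma closed_chamber : closed (@chamber R r).
Proof.
have -> : @chamber R r =
    \bigcap_(i in [set: 'I_r]) (fun x => x ord0 i) @^-1` [set y | 0 <= y] `&`
    \bigcap_(ij in [set ij : 'I_r * 'I_r | (ij.1 <= ij.2)%N])
      (fun x => x ord0 ij.1 - x ord0 ij.2) @^-1` [set y | 0 <= y].
  apply/seteqP; split => x [xge0 xsorted].
    by split => [i _|[i j] ij] /=; rewrite ?subr_ge0; [exact: xge0|exact: xsorted].
  by split => [i|i j ij]; [exact: xge0|have := xsorted (i, j) ij; rewrite /= subr_ge0].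
apply: closedI; apply: closed_bigI.
  move=> i _; apply: preimage_closed; last exact: closed_ge.
  by move=> x _; exact: coord_continuous.
move=> [i j] _; apply: preimage_closed; last exact: closed_ge.
by move=> x _; apply: continuousB; exact: coord_continuous.
Qed.

Definition chambers (S : {set 'S_r}) : set 'rV[R]_r :=
  \bigcup_(w in [set w | w \in S]) (wact w^-1 @^-1` @chamber R r).

Lemma closed_chambers S : closed (chambers S).
Proof.
apply: closed_bigcup => [|w _]; first exact: finite_finset.
by apply: preimage_closed; [move=> x _; exact: continuous_wact|exact: closed_chamber].
Qed.

Lemma cone_sub_chambersU S : @cone R r `<=` chambers S `|` chambers (~: S).
Proof.
move=> x xge0; have [u usorted] := exists_perm_sorted (fun i => x ord0 i).
have Cx : chamber (wact (u^-1)^-1 x).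
  by rewrite invgK; split => [i|i j ij]; rewrite !wactE //; exact: usorted.
by have [uS|uS] := boolP ((u^-1)%g \in S); [left|right]; exists (u^-1)%g => //=; rewrite inE.
Qed.

End WeylAction.

Lemma connected_sub_closedU (T : topologicalType) (A F G : set T) :
  connected A -> closed F -> closed G -> A `<=` F `|` G ->
  A `&` F `&` G = set0 -> A `&` F !=set0 -> A `<=` F.
Proof.
move=> cA cF cG AFG AFG0 AF0.
suff <- : A `&` F = A by move=> x [].
apply: cA => //; last by exists F.
exists (~` G); first by rewrite openC.
apply/seteqP; split=> x [Ax Fx]; split => //.
  by move=> Gx; have : (A `&` F `&` G) x by []; rewrite AFG0.
by case: (AFG _ Ax).
Qed.

Section Domain.
Variables (R : realType) (r : nat) (U : set 'rV[R]_r).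
Hypothesis hr : (0 < r)%N.
Hypothesis hU_open : exists V : set 'rV[R]_r, open V /\ U = V `&` @cone R r.

(* When [U] contains the origin, a small multiple of [E_1 + ... + E_r] is a
   nonzero point of [U] on every wall of the chamber. *)
Lemma plus_part_diagonal : U 0 ->
  exists z, [/\ plus_part U z, z != 0 & forall i j, z ord0 i = z ord0 j].
Proof.
case: hU_open => V [oV ->] [V0 _].
have /nbhs_ballP[e /= e0 eV] : nbhs (0 : 'rV[R]_r) V by rewrite openE in oV; exact: oV.
have he : 0 <= e / 2 by lra.
exists (const_mx (e / 2)); split.
- split; last by split => [i|i j _]; rewrite !mxE.
  split; last by move=> i; rewrite mxE.
  apply: eV; split => // i j; rewrite !mxE /ball /= sub0r normrN ger0_norm //; lra.
- by apply/eqP => /matrixP /(_ ord0 (Ordinal hr)); rewrite !mxE; lra.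
- by move=> i j; rewrite !mxE.
Qed.

Lemma gamma_in_W0 (k : 'I_r) b : (k.+1 < r)%N -> plus_part U b ->
  b ord0 k = b ord0 (nextord k) -> gamma k \in W0 U.
Proof.
move=> kr Pb bk; apply/mem_gen/imset_f; rewrite inE kr; apply/asboolP.
have [b0|b0] := eqVneq b 0; last by exists b.
have U0 : U 0 by rewrite -b0; case: Pb.
by have [z [Pz z0 zconst]] := plus_part_diagonal U0; exists z.
Qed.

(* Among all [u] with [wact u a = wact t a] and [u t^-1 \in W0 U], one
   maximising [\sum_i i * u i] has no descent: at a descent [k] the point
   [wact t a] lies on the wall [x_k = x_{k+1}], so [gamma k * u] is again
   admissible and has a larger weight. *)
Lemma chamber_transport_in_W0 a t :
  chamber a -> plus_part U (wact t a) -> t \in W0 U.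
Proof.
move=> [_ asorted] Pb; have [_ [_ bsorted]] := Pb.
pose admissible u := ((u * t^-1)%g \in W0 U) && (wact u a == wact t a).
have admt : admissible t by rewrite /admissible mulgV group1 eqxx.
pose weight := perm_weight (fun v : 'I_r => - (v : nat)%:R : R).
have [u /andP[uW /eqP ua] umin] := arg_minP weight admt.
suff u1 : u = 1%g by move: uW; rewrite u1 mul1g groupV.
apply: perm_ascending_eq1 => k kr; rewrite ltnNge; apply/negP => le_uk.
have lt_uk : (u (nextord k) < u k)%N.
  by rewrite ltn_neqAle le_uk andbT (inj_eq val_inj) (inj_eq perm_inj) eq_sym nextord_neq.
have bk : wact t a ord0 k = wact t a ord0 (nextord k).
  apply/eqP; rewrite eq_le andbC bsorted ?nextordE //= -ua !wactE.
  exact/asorted/ltnW.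
have adm_gu : admissible (gamma k * u)%g.
  rewrite /admissible -mulgA groupM ?uW ?(gamma_in_W0 kr Pb bk) //=.
  by rewrite wactM ua wact_gamma_id.
have := umin _ adm_gu; rewrite /weight perm_weight_gammaM //.
have : ((u (nextord k) : nat)%:R : R) < (u k : nat)%:R by rewrite ltr_nat.
lra.
Qed.

Hypothesis hU_inv : forall (s : 'S_r) x, U x -> U (wact s x).

Lemma chambers_W0_disjoint :
  U `&` chambers (W0 U) `&` chambers (~: W0 U) = set0.
Proof.
apply/seteqP; split => // z [[Uz [v /= vW Cv]] [w /= wW Cw]].
have Pw : plus_part U (wact w^-1 z) by split; [exact: hU_inv|].
have : (w^-1 * v)%g \in W0 U.
  by apply: (chamber_transport_in_W0 Cv); rewrite wactM wactK.
rewrite inE in vW wW; rewrite -(groupMr _ (groupVr vW)) -mulgA mulgV mulg1 groupV.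
by rewrite (negPf wW).
Qed.

Section Component.
Variable x0 : 'rV[R]_r.
Hypothesis Px0 : plus_part U x0.
Hypothesis hplus_conn : connected (plus_part U).
Local Notation C := (connected_component U x0).

Lemma W0_orbit_step w k : wact w @` plus_part U `<=` C -> k \in Gamma0 U ->
  wact (w * gamma k)%g @` plus_part U `<=` C.
Proof.
move=> wPC; rewrite inE => /andP[_ /asboolP[z [Pz [_ zk]]]].
have Cwz : C (wact w z) by apply: wPC; exists z.
have wz_image : (wact (w * gamma k)%g @` plus_part U) (wact w z).
  by exists z => //; rewrite wactM wact_gamma_id.
move=> y wky; apply: connected_component_trans Cwz _.
apply: connected_component_max wz_image _ _ _ wky.
  by move=> _ [x [Ux _] <-]; exact: hU_inv.
apply: connected_continuous_connected hplus_conn _.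
exact/continuous_subspaceT/continuous_wact.
Qed.

Lemma W0_orbit_sub_component w : w \in W0 U -> wact w @` plus_part U `<=` C.
Proof.
case/gen_prodgP => n [c cG ->]; elim: n c cG => [|n IH] c cG.
  rewrite big_ord0 => _ [x Px <-]; rewrite wact1.
  by apply: connected_component_max Px0 _ hplus_conn _ Px => y [].
rewrite big_ord_recr /=; have /imsetP[k Gk ->] := cG ord_max.
by apply: W0_orbit_step Gk; apply: IH => i; exact: cG.
Qed.

Lemma component_sub_W0_chambers : C `<=` chambers (W0 U).
Proof.
have CU : C `<=` U := @connected_component_sub _ U x0.
apply: (connected_sub_closedU (@component_connected _ U x0))
  (@closed_chambers R r _) (@closed_chambers R r (~: W0 U)) _ _ _.
- move=> y /CU Uy; apply: cone_sub_chambersU.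
  by case: hU_open Uy => V [_ ->] [].
- rewrite -subset0 -chambers_W0_disjoint => y [[Cy Fy] Gy].
  by split; [split; [exact: CU|]|].
- exists x0; split; first exact: connected_component_refl Px0.1.
  by exists 1%g; rewrite /= ?inE ?group1 // invg1 wact1; exact: Px0.2.
Qed.

End Component.

End Domain.

Theorem lemma4p9 (R : realType) (r : nat) (hr : (0 < r)%N)
  (U : set 'rV[R]_r)
  (hU_open : exists V : set 'rV[R]_r, open V /\ U = V `&` @cone R r)
  (hU_inv : forall (s : 'S_r) (x : 'rV[R]_r), U x -> U (wact s x))
  (hplus_conn : connected (plus_part U)) :
  forall x0, plus_part U x0 ->
    [set y | exists2 w : 'S_r, w \in W0 U &
                exists2 x, plus_part U x & y = wact w x]
    = connected_component U x0.
Proof.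
move=> x0 Px0; apply/seteqP; split.
  move=> _ [w wW [x Px ->]].
  by apply: (W0_orbit_sub_component hU_inv Px0 hplus_conn wW); exists x.
move=> y Cy.
have [w /= wW Cw] := component_sub_W0_chambers hr hU_open hU_inv Px0 Cy.
exists w => //.
exists (wact w^-1 y); last by rewrite wactK.
by split => //; apply: hU_inv; exact: connected_component_sub Cy.
Qed.
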